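(* Let $(b,c)\in\{(1,4),(4,1)\}$. (1) Let $x,y$ be non-commuting indeterminates and $C=xyx^{-1}y^{-1}$. Let $(R_n)_{n\in\mathbb Z}$ be the solution of the $(b,c)$-system with $C$ as the coefficient and initial data $R_0=yxy^{-1}$, $R_1=y$ (so that $CR_0=x$). Then for every $n\in\mathbb Z$, $R_n$ is a Laurent polynomial in $x,y$ with non-negative integer coefficients. (2) Let $X,Y$ be non-commuting indeterminates and $C=XYX^{-1}Y^{-1}$. Let $(R_n)_{n\in\mathbb Z}$ be the solution of the $(b,c)$-system with $C$ as the coefficient and initial data $R_1=YXY^{-1}$, $R_2=Y$ (so that $CR_1=X$). Then for every $n\in\mathbb Z$, $R_n$ is a Laurent polynomial in $X,Y$ with non-negative integer coefficients.
   Context: For two non-commuting indeterminates $u,v$ (here $u,v$ stands for $x,y$ or $X,Y$), work in the free skew field over $\mathbb C$ generated by $u,v$, i.e. the skew field of non-commutative rational functions in $u,v$. A (non-commutative) Laurent polynomial in $u,v$ is a $\mathbb Z$-linear combination of words (Laurent monomials) in $u^{\pm1},v^{\pm1}$. It has non-negative integer coefficients if all coefficients of its expansion in reduced words are in $\mathbb Z_{\ge 0}$. For non-negative integers $b,c$ and a given element $C$, the $(b,c)$-system is the recursion $$R_{n+1}\,C\,R_{n-1}=\begin{cases}1+R_n^{b}, & n\text{ odd},\\ 1+R_n^{c}, & n \text{ even},\end{cases}\qquad n\in\mathbb Z.$$ Given two consecutive values, this recursion determines $R_n$ uniquely for all $n\in\mathbb Z$. *)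

(* The integral group ring Z[F_2] of the free group on two
   generators, i.e. non-commutative Laurent polynomials in two variables. *)
From mathcomp Require Import all_boot all_order all_algebra.
Set Implicit Arguments. Unset Strict Implicit. Unset Printing Implicit Defensive.
Import GRing.Theory Num.Theory.
Local Open Scope ring_scope.

(* A letter: (generator, inverted?).  generator false = x (or X), true = y (or Y). *)
Definition letter := (bool * bool)%type.
Definition word := seq letter.
Definition inv_letter (l : letter) : letter := (l.1, ~~ l.2).

Fixpoint red (w : word) : word :=
  match w with
  | [::] => [::]
  | a :: w' =>
      match red w' with
      | b :: r' => if b == inv_letter a then r' else a :: b :: r'
      | [::] => [:: a]
      end
  end.

(* A Laurent polynomial is represented by a finite formal Z-combination of
   words; two representations are identified when all coefficients on
   reduced words agree. *)
Definition LP := seq (int * word).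

Definition coef (p : LP) (w : word) : int :=
  \sum_(t <- p | red t.2 == w) t.1.

Definition lp_eq (p q : LP) : Prop := forall w : word, coef p w = coef q w.

Definition lp_add (p q : LP) : LP := p ++ q.
Definition lp_mul (p q : LP) : LP :=
  [seq (t.1 * s.1, t.2 ++ s.2) | t <- p, s <- q].
Definition lp_one : LP := [:: (1, [::])].
Definition lp_pow (p : LP) (n : nat) : LP := iter n (lp_mul p) lp_one.
Definition lp_word (w : word) : LP := [:: (1, w)].

Definition lp_nonneg (p : LP) : Prop := forall w : word, 0 <= coef p w.

Definition gx : letter := (false, false).
Definition gxi : letter := (false, true).
Definition gy : letter := (true, false).
Definition gyi : letter := (true, true).

Definition Ccoef : LP := lp_word [:: gx; gy; gxi; gyi].

Definition bc_system (b c : nat) (C : LP) (R : int -> LP) : Prop :=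
  forall n : int,
    lp_eq (lp_mul (lp_mul (R (n + 1)) C) (R (n - 1)))
          (lp_add lp_one (lp_pow (R n) (if odd `|n|%N then b else c))).

(* For (b, c) = (1, 4) the even terms a_k = R_2k of the solution obey the
   linear recurrence a_(k+2) = a_(k+1) K - a_k C^-1 for an explicit K = A + B,
   and the odd terms are R_(2k+1) = a_(k+1) C a_k - 1.  Four polynomial
   identities in (a_k, a_(k+1)), checked on the initial values, are preserved
   by the recurrence and imply the relations of the system.  The subtraction in
   the recurrence disappears once a_(k+1) is tracked together with
   a_(k+1) B - a_k C^-1, B C a_(k+1) - C a_k and a_(k+2) C a_(k+1) - 1: these
   evolve with non-negative coefficients, given that M = A B - C^-1 and
   M' = B C A - 1 have them.  For (4, 1) even and odd indices swap roles.
   Negative indices come from the anti-automorphism of the free group that fixes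
   C and exchanges y and y x y^-1, and part (2) is part (1) for (c, b) shifted
   by one. *)

From HB Require Import structures.
From mathcomp Require Import all_boot all_order all_algebra.
From mathcomp Require Import generic_quotient zify.
Set Implicit Arguments. Unset Strict Implicit. Unset Printing Implicit Defensive.
Import GRing.Theory Num.Theory.
Local Open Scope quotient_scope.
Local Open Scope ring_scope.

(** * Free reduction *)

Definition cons_red (a : letter) (s : word) : word :=
  if s is b :: r then (if b == inv_letter a then r else a :: b :: r) else [:: a].

Lemma red_cons a w : red (a :: w) = cons_red a (red w).
Proof. by []. Qed.

Fixpoint reduced (w : word) : bool :=
  if w is a :: ((b :: _) as w') then (b != inv_letter a) && reduced w' else true.

Lemma inv_letterK : involutive inv_letter.
Proof. by case=> a b; rewrite /inv_letter /= negbK. Qed.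

Lemma reduced_behead a w : reduced (a :: w) -> reduced w.
Proof. by case: w => //= b w /andP[]. Qed.

Lemma reduced_cons_red a s : reduced s -> reduced (cons_red a s).
Proof.
case: s => [|b r] //= h; case: ifP => e; last by rewrite /= h andbT e.
by move: h; case: r => //= c r /andP[].
Qed.

Lemma reduced_red w : reduced (red w).
Proof. by elim: w => [|a w IH] //=; apply: (reduced_cons_red a IH). Qed.

Lemma red_reduced w : reduced w -> red w = w.
Proof.
elim: w => [|a w IH] // h; rewrite red_cons IH ?(reduced_behead h) //.
by case: w h {IH} => //= b r /andP[/negbTE -> _].
Qed.

Lemma red_idem w : red (red w) = red w.
Proof. exact/red_reduced/reduced_red. Qed.

Lemma cons_redK a t : reduced t -> cons_red a (cons_red (inv_letter a) t) = t.
Proof.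
case: t => [|b r] /=; first by rewrite eqxx.
rewrite inv_letterK; case: eqP => [->|ne] h; last by rewrite /= eqxx.
by case: r h => [|c r] //= /andP[ne' _]; rewrite (negbTE ne').
Qed.

Lemma red_catr u v : red (u ++ v) = red (u ++ red v).
Proof. by elim: u => [|a u IH] /=; [rewrite red_idem | rewrite IH]. Qed.

Lemma red_cons_red_cat a s v :
  reduced s -> red (cons_red a s ++ v) = cons_red a (red (s ++ v)).
Proof.
case: s => [|b r] //= h; case: eqP => [->|_] //=.
by rewrite cons_redK //; apply: reduced_red.
Qed.

Lemma red_catl u v : red (u ++ v) = red (red u ++ v).
Proof.
elim: u => [|a u IH] //.
by rewrite cat_cons !red_cons IH red_cons_red_cat // reduced_red.
Qed.

Lemma red_cat u v : red (u ++ v) = red (red u ++ red v).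
Proof. by rewrite red_catl red_catr. Qed.

Definition winv (w : word) : word := rev (map inv_letter w).

Lemma winv_cat u v : winv (u ++ v) = winv v ++ winv u.
Proof. by rewrite /winv map_cat rev_cat. Qed.

Lemma winv_cons a w : winv (a :: w) = winv w ++ [:: inv_letter a].
Proof. by rewrite /winv /= rev_cons cats1. Qed.

Lemma winvK : involutive winv.
Proof.
move=> w; rewrite /winv map_rev revK -map_comp map_id_in // => l _ /=.
exact: inv_letterK.
Qed.

Lemma red_cat_winv w : red (w ++ winv w) = [::].
Proof.
elim: w => [|a w IH] //.
by rewrite winv_cons cat_cons red_cons catA red_catl IH /= eqxx.
Qed.

Lemma red_winv_cat w : red (winv w ++ w) = [::].
Proof. by rewrite -{2}(winvK w) red_cat_winv. Qed.

Lemma red_cat_eqL u v w : red w = w ->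
  (red (u ++ v) == w) = (red u == red (w ++ winv v)).
Proof.
move=> hw; apply/eqP/eqP => h.
  by rewrite -{}h -red_catl -catA red_catr red_cat_winv cats0.
by rewrite red_catl h -red_catl -catA red_catr red_winv_cat cats0 hw.
Qed.

Lemma red_cat_eqR u v w : red w = w ->
  (red (u ++ v) == w) = (red v == red (winv u ++ w)).
Proof.
move=> hw; apply/eqP/eqP => h.
  by rewrite -{}h -red_catr catA red_catl red_winv_cat.
by rewrite red_catr h -red_catr catA red_catl red_cat_winv /= hw.
Qed.

(** * The group ring Z[F_2] *)

Lemma coef_cat p q w : coef (p ++ q) w = coef p w + coef q w.
Proof. by rewrite /coef big_cat. Qed.

Lemma coef_nonreduced p w : red w != w -> coef p w = 0.
Proof.
move=> hw; rewrite /coef big1 // => t /eqP ht.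
by move: hw; rewrite -ht red_idem eqxx.
Qed.

Lemma coef_notin p w : w \notin [seq red t.2 | t <- p] -> coef p w = 0.
Proof.
move=> hn; rewrite /coef big1_seq // => t /andP[/eqP e tin].
by move: hn; rewrite -e (map_f (fun t : int * word => red t.2) tin).
Qed.

Lemma coef_mull p q w : red w = w ->
  coef (lp_mul p q) w = \sum_(s <- q) coef p (red (w ++ winv s.2)) * s.1.
Proof.
move=> hw; rewrite /coef /lp_mul big_mkcond big_allpairs_dep /= exchange_big /=.
apply: eq_bigr => s _; rewrite [in RHS]big_mkcond mulr_suml; apply: eq_bigr => t _.
by rewrite red_cat_eqL //; case: ifP; rewrite ?mul0r.
Qed.

Lemma coef_mulr p q w : red w = w ->
  coef (lp_mul p q) w = \sum_(t <- p) t.1 * coef q (red (winv t.2 ++ w)).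
Proof.
move=> hw; rewrite /coef /lp_mul big_mkcond big_allpairs_dep /=.
apply: eq_bigr => t _; rewrite [in RHS]big_mkcond mulr_sumr; apply: eq_bigr => s _.
by rewrite red_cat_eqR //; case: ifP; rewrite ?mulr0.
Qed.

Lemma lp_eq_sym p q : lp_eq p q -> lp_eq q p.
Proof. by move=> h w. Qed.

Lemma lp_eq_trans p q r : lp_eq p q -> lp_eq q r -> lp_eq p r.
Proof. by move=> h1 h2 w; rewrite h1 h2. Qed.

Lemma lp_eq_cat p p' q q' : lp_eq p p' -> lp_eq q q' -> lp_eq (p ++ q) (p' ++ q').
Proof. by move=> h1 h2 w; rewrite !coef_cat h1 h2. Qed.

Lemma lp_eq_mul p p' q q' :
  lp_eq p p' -> lp_eq q q' -> lp_eq (lp_mul p q) (lp_mul p' q').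
Proof.
move=> h1 h2 w; case: (eqVneq (red w) w) => hw; last by rewrite !coef_nonreduced.
rewrite coef_mull // (coef_mull p') //; under eq_bigr do rewrite h1.
by rewrite -!coef_mull // !coef_mulr //; under eq_bigr do rewrite h2.
Qed.

(* [coef] is a locked big operator, which [vm_compute] cannot unfold. *)
Fixpoint coef_rec (p : LP) (w : word) : int :=
  if p is t :: p' then (if red t.2 == w then t.1 else 0) + coef_rec p' w else 0.

Lemma coef_recE p w : coef_rec p w = coef p w.
Proof.
elim: p => [|t p IH] /=; first by rewrite /coef big_nil.
by rewrite /coef big_cons -/(coef p w) IH; case: ifP; rewrite ?add0r.
Qed.

Definition lp_eqb (p q : LP) : bool :=
  all (fun t => coef_rec p (red t.2) == coef_rec q (red t.2)) (p ++ q).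

Lemma lp_eqP p q : reflect (lp_eq p q) (lp_eqb p q).
Proof.
apply: (iffP allP) => [h w|h t _]; last by rewrite !coef_recE h.
case: (boolP (w \in [seq red t.2 | t <- p ++ q])) => [/mapP[t tin ->]|hw].
  by rewrite -!coef_recE; apply/eqP/h.
by rewrite !coef_notin //; apply: contra hw;
  rewrite map_cat mem_cat => ->; rewrite ?orbT.
Qed.

Lemma lp_eqb_refl : reflexive lp_eqb.
Proof. by move=> p; apply/lp_eqP. Qed.

Lemma lp_eqb_sym : symmetric lp_eqb.
Proof. by move=> p q; apply/lp_eqP/lp_eqP; apply: lp_eq_sym. Qed.

Lemma lp_eqb_trans : transitive lp_eqb.
Proof. by move=> q p r /lp_eqP h1 /lp_eqP h2; apply/lp_eqP/(lp_eq_trans h1). Qed.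

Canonical lp_equiv := EquivRel lp_eqb lp_eqb_refl lp_eqb_sym lp_eqb_trans.

Definition ZF2 := {eq_quot lp_equiv}.
HB.instance Definition _ := Choice.on ZF2.
HB.instance Definition _ := EqQuotient.on ZF2.

Notation zf2 := (\pi_ZF2).

Lemma zf2_eq p q : zf2 p = zf2 q <-> lp_eq p q.
Proof. by split=> [/eqmodP/lp_eqP|/lp_eqP/eqmodP]. Qed.

Lemma lp_eq_repr p : lp_eq (repr (zf2 p)) p.
Proof. by apply/zf2_eq; rewrite reprK. Qed.

Definition negLP (p : LP) : LP := [seq (- t.1, t.2) | t <- p].

Lemma coef_neg p w : coef (negLP p) w = - coef p w.
Proof. by rewrite /negLP /coef big_map sumrN. Qed.

HB.lock Definition addZ (x y : ZF2) : ZF2 := zf2 (repr x ++ repr y).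
HB.lock Definition oppZ (x : ZF2) : ZF2 := zf2 (negLP (repr x)).
HB.lock Definition mulZ (x y : ZF2) : ZF2 := zf2 (lp_mul (repr x) (repr y)).

Lemma addZ_pi p q : addZ (zf2 p) (zf2 q) = zf2 (p ++ q).
Proof. by rewrite addZ.unlock; apply/zf2_eq/lp_eq_cat; apply: lp_eq_repr. Qed.

Lemma oppZ_pi p : oppZ (zf2 p) = zf2 (negLP p).
Proof. by rewrite oppZ.unlock; apply/zf2_eq => w; rewrite !coef_neg lp_eq_repr. Qed.

Lemma mulZ_pi p q : mulZ (zf2 p) (zf2 q) = zf2 (lp_mul p q).
Proof. by rewrite mulZ.unlock; apply/zf2_eq/lp_eq_mul; apply: lp_eq_repr. Qed.

Lemma addZA : associative addZ.
Proof.
move=> x y z; elim/quotW: x => p; elim/quotW: y => q; elim/quotW: z => r.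
by rewrite !addZ_pi catA.
Qed.

Lemma addZC : commutative addZ.
Proof.
move=> x y; elim/quotW: x => p; elim/quotW: y => q.
by rewrite !addZ_pi; apply/zf2_eq => w; rewrite !coef_cat addrC.
Qed.

Lemma add0Z : left_id (zf2 [::]) addZ.
Proof. by move=> x; elim/quotW: x => p; rewrite addZ_pi. Qed.

Lemma addNZ : left_inverse (zf2 [::]) oppZ addZ.
Proof.
move=> x; elim/quotW: x => p; rewrite oppZ_pi addZ_pi; apply/zf2_eq => w.
by rewrite coef_cat coef_neg addNr /coef big_nil.
Qed.

HB.instance Definition _ := GRing.isZmodule.Build ZF2 addZA addZC add0Z addNZ.

Lemma mulZA : associative mulZ.
Proof.
move=> x y z; elim/quotW: x => p; elim/quotW: y => q; elim/quotW: z => r.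
rewrite !mulZ_pi; apply/zf2_eq => w.
case: (eqVneq (red w) w) => hw; last by rewrite !coef_nonreduced.
rewrite coef_mull // [RHS]coef_mull // [in RHS]/lp_mul big_allpairs_dep /=.
rewrite exchange_big /=.
apply: eq_bigr => s _; rewrite coef_mull ?red_idem // mulr_suml; apply: eq_bigr => t _.
by rewrite mulrA -red_catl winv_cat catA.
Qed.

Lemma mul1Z : left_id (zf2 lp_one) mulZ.
Proof.
move=> x; elim/quotW: x => p; rewrite mulZ_pi; apply/zf2_eq => w.
case: (eqVneq (red w) w) => hw; last by rewrite !coef_nonreduced.
by rewrite coef_mulr // big_cons big_nil /= mul1r addr0 hw.
Qed.

Lemma mulZ1 : right_id (zf2 lp_one) mulZ.
Proof.
move=> x; elim/quotW: x => p; rewrite mulZ_pi; apply/zf2_eq => w.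
case: (eqVneq (red w) w) => hw; last by rewrite !coef_nonreduced.
by rewrite coef_mull // big_cons big_nil /= mulr1 addr0 cats0 hw.
Qed.

Lemma mulZDl : left_distributive mulZ addZ.
Proof.
move=> x y z; elim/quotW: x => p; elim/quotW: y => q; elim/quotW: z => r.
by rewrite !addZ_pi !mulZ_pi addZ_pi /lp_mul allpairs_cat.
Qed.

Lemma mulZDr : right_distributive mulZ addZ.
Proof.
move=> x y z; elim/quotW: x => p; elim/quotW: y => q; elim/quotW: z => r.
rewrite !addZ_pi !mulZ_pi addZ_pi; apply/zf2_eq => w.
case: (eqVneq (red w) w) => hw; last by rewrite !coef_nonreduced.
rewrite coef_cat !coef_mulr // -big_split /=.
by apply: eq_bigr => t _; rewrite coef_cat mulrDr.
Qed.

HB.instance Definition _ :=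
  GRing.Zmodule_isPzRing.Build ZF2 mulZA mul1Z mulZ1 mulZDl mulZDr.

Lemma zf2_add p q : zf2 (lp_add p q) = zf2 p + zf2 q.
Proof. by rewrite -addZ_pi. Qed.

Lemma zf2_mul p q : zf2 (lp_mul p q) = zf2 p * zf2 q.
Proof. by rewrite -mulZ_pi. Qed.

Lemma zf2_opp p : zf2 (negLP p) = - zf2 p.
Proof. by rewrite -oppZ_pi. Qed.

Lemma zf2_one : zf2 lp_one = 1.
Proof. by []. Qed.

Lemma zf2_zero : zf2 [::] = 0.
Proof. by []. Qed.

Lemma zf2_pow p n : zf2 (lp_pow p n) = zf2 p ^+ n.
Proof. by elim: n => [|n IH]; rewrite ?expr0 // exprS -IH /lp_pow iterS zf2_mul. Qed.

(** * A normaliser for non-commutative ring identities *)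

Inductive ncterm :=
| NCAtom of nat | NCInt of int | NCAdd of ncterm & ncterm | NCMul of ncterm & ncterm
| NCOpp of ncterm | NCExp of ncterm & nat.

Definition ncpoly := seq (int * seq nat).

Definition ncpoly_mul (p q : ncpoly) : ncpoly :=
  [seq (s.1 * t.1, s.2 ++ t.2) | s <- p, t <- q].

Fixpoint ncnorm (e : ncterm) : ncpoly :=
  match e with
  | NCAtom n => [:: (1, [:: n])]
  | NCInt z => [:: (z, [::])]
  | NCAdd a b => ncnorm a ++ ncnorm b
  | NCMul a b => ncpoly_mul (ncnorm a) (ncnorm b)
  | NCOpp a => [seq (- t.1, t.2) | t <- ncnorm a]
  | NCExp a n => iter n (ncpoly_mul (ncnorm a)) [:: (1, [::])]
  end.

Section NCEval.
Variables (R : pzRingType) (env : seq R).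

Fixpoint nceval (e : ncterm) : R :=
  match e with
  | NCAtom n => env`_n
  | NCInt z => z%:~R
  | NCAdd a b => nceval a + nceval b
  | NCMul a b => nceval a * nceval b
  | NCOpp a => - nceval a
  | NCExp a n => nceval a ^+ n
  end.

Definition eval_monomial (m : seq nat) : R :=
  foldr (fun i acc => env`_i * acc) 1 m.
Definition eval_ncpoly (p : ncpoly) : R := \sum_(t <- p) eval_monomial t.2 *~ t.1.

Lemma eval_monomial_cat u v :
  eval_monomial (u ++ v) = eval_monomial u * eval_monomial v.
Proof. by elim: u => [|i u IH] /=; rewrite ?mul1r // IH mulrA. Qed.

Lemma eval_ncpoly_mul p q :
  eval_ncpoly (ncpoly_mul p q) = eval_ncpoly p * eval_ncpoly q.
Proof.
rewrite /eval_ncpoly /ncpoly_mul big_allpairs_dep /= mulr_suml.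
apply: eq_bigr => s _; rewrite mulr_sumr; apply: eq_bigr => t _.
by rewrite eval_monomial_cat mulrzAl mulrzAr -mulrzA mulrC.
Qed.

Lemma ncnorm_sound e : eval_ncpoly (ncnorm e) = nceval e.
Proof.
rewrite /eval_ncpoly; elim: e => [n|z|a IHa b IHb|a IHa b IHb|a IHa|a IHa n] /=.
- by rewrite big_seq1 /= mulr1 mulr1z.
- by rewrite big_seq1.
- by rewrite big_cat IHa IHb.
- by rewrite -[LHS]/(eval_ncpoly _) eval_ncpoly_mul /eval_ncpoly IHa IHb.
- by rewrite big_map -IHa -sumrN; apply: eq_bigr => t _; rewrite mulrNz.
- elim: n => [|n IH]; first by rewrite big_seq1.
  by rewrite iterS -[LHS]/(eval_ncpoly _) eval_ncpoly_mul /eval_ncpoly IH IHa exprS.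
Qed.

Variables (inv_pairs : seq (nat * nat)).
Hypothesis inv_pairsP : forall i j, (i, j) \in inv_pairs -> env`_i * env`_j = 1.

Fixpoint cancel_monomial (m : seq nat) : seq nat :=
  if m is i :: m' then
    if cancel_monomial m' is j :: r then
      (if (i, j) \in inv_pairs then r else i :: j :: r)
    else [:: i]
  else [::].

Lemma eval_cancel_monomial m : eval_monomial (cancel_monomial m) = eval_monomial m.
Proof.
elim: m => [|i m IH] //=; rewrite -IH.
case: (cancel_monomial m) => [|j r] //=.
by case: ifP => // h; rewrite mulrA inv_pairsP // mul1r.
Qed.

Fixpoint ncpoly_coef (p : ncpoly) (m : seq nat) : int :=
  if p is s :: p' then
    (if cancel_monomial s.2 == m then s.1 else 0) + ncpoly_coef p' m
  else 0.

Lemma ncpoly_coefE p m :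
  ncpoly_coef p m = \sum_(s <- p | cancel_monomial s.2 == m) s.1.
Proof.
elim: p => [|s p IH] /=; rewrite ?big_nil // big_cons IH.
by case: ifP; rewrite ?add0r.
Qed.

Definition ncpoly_zero (p : ncpoly) : bool :=
  all (fun t => ncpoly_coef p (cancel_monomial t.2) == 0) p.

Lemma ncpoly_zero_sound p : ncpoly_zero p -> eval_ncpoly p = 0.
Proof.
move=> /allP hz; pose key (t : int * seq nat) := cancel_monomial t.2.
have -> : eval_ncpoly p = \sum_(t <- p) eval_monomial (key t) *~ t.1.
  by apply: eq_bigr => t _; rewrite eval_cancel_monomial.
set U := undup [seq key t | t <- p].
have key_once t : t \in p -> count (fun u => key t == u) U = 1%N.
  move=> tin; have := count_uniq_mem (key t) (undup_uniq [seq key t | t <- p]).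
  rewrite mem_undup (map_f key tin) => /= <-.
  by apply: eq_count => u; rewrite /= eq_sym.
have -> : \sum_(t <- p) eval_monomial (key t) *~ t.1 =
          \sum_(t <- p) \sum_(u <- U | key t == u) eval_monomial (key t) *~ t.1.
  by apply: eq_big_seq => t tin; rewrite big_const_seq key_once //= addr0.
under eq_bigr do rewrite big_mkcond.
rewrite exchange_big /= big1_seq // => u /andP[_ uin]; rewrite -big_mkcond /=.
have /mapP[t0 t0in ->] : u \in [seq key t | t <- p] by rewrite -mem_undup.
rewrite (eq_bigr (fun t => eval_monomial (key t0) *~ t.1)); last by move=> t /eqP ->.
by rewrite -mulrz_sumr -ncpoly_coefE (eqP (hz t0 t0in)) mulr0z.
Qed.

Lemma nceval_eq e1 e2 :
  ncpoly_zero (ncnorm (NCAdd e1 (NCOpp e2))) -> nceval e1 = nceval e2.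
Proof.
move=> /ncpoly_zero_sound; rewrite ncnorm_sound /= => /eqP.
by rewrite subr_eq0 => /eqP.
Qed.

End NCEval.

Ltac nc_index x l :=
  lazymatch l with
  | x :: _ => constr:(0%N)
  | _ :: ?l' => let n := nc_index x l' in constr:(S n)
  end.

Ltac nc_reify l t :=
  lazymatch t with
  | @Algebra.add _ ?u ?v =>
      let a := nc_reify l u in let b := nc_reify l v in constr:(NCAdd a b)
  | @Algebra.opp _ ?u => let a := nc_reify l u in constr:(NCOpp a)
  | @GRing.mul _ ?u ?v =>
      let a := nc_reify l u in let b := nc_reify l v in constr:(NCMul a b)
  | @GRing.exp _ ?u ?n => let a := nc_reify l u in constr:(NCExp a n)
  | GRing.one _ => constr:(NCInt 1)
  | @Algebra.zero _ => constr:(NCInt 0)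
  | _ => let n := nc_index t l in constr:(NCAtom n)
  end.

(* Proves a ring identity in the atoms [l = [:: c; ci; ...]], where
   [hcci : c * ci = 1] and [hcic : ci * c = 1]. *)
Ltac nc_ring l hcci hcic :=
  lazymatch goal with
  | |- ?lhs = ?rhs =>
    let e1 := nc_reify l lhs in
    let e2 := nc_reify l rhs in
    apply: (@nceval_eq _ l [:: (0%N, 1%N); (1%N, 0%N)] _ e1 e2);
    [ move=> ? ?; rewrite !inE => /orP[] /eqP [-> ->] /=; [exact hcci | exact hcic]
    | vm_compute; reflexivity ]
  end.

(** * The linearised system *)

Lemma double_or_doubleS m : (exists k, m = k.*2) \/ (exists k, m = k.*2.+1).
Proof.
by rewrite -(odd_double_half m); case: (odd m); [right | left]; exists m./2.
Qed.

Definition interleave T (f g : nat -> T) (m : nat) : T :=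
  if odd m then g m./2 else f m./2.

Lemma interleave_double T (f g : nat -> T) k : interleave f g k.*2 = f k.
Proof. by rewrite /interleave odd_double doubleK. Qed.

Lemma interleave_doubleS T (f g : nat -> T) k : interleave f g k.*2.+1 = g k.
Proof. by rewrite /interleave /= odd_double uphalf_double. Qed.

Section LinearRecurrence.
Variables (R : pzRingType) (C Ci A B : R).
Hypotheses (hCCi : C * Ci = 1) (hCiC : Ci * C = 1).

Definition lin_step (a b : R) : R := b * (A + B) - a * Ci.

Definition left_rec_err a b := (A + B) * C * b - lin_step a b - C * a.
Definition left_rec_err_prev a b :=
  (A + B) * C * a - C * a * (A + B) * C - b + C * b * C.
Definition qcomm_err a b := a * b - b * C * a - Ci + 1.
Definition cassini_err a b := lin_step a b * C * a - b * b - (A + B) * C.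

(* Defects of: the recurrence written from the left, the same one step back,
   the quasi-commutation [a b - b C a = C^-1 - 1], and the Cassini-type identity
   [a_(k+2) C a_k - a_(k+1)^2 = (A + B) C]. *)
Definition rec_invariant a b := [/\ left_rec_err a b = 0,
  left_rec_err_prev a b = 0, qcomm_err a b = 0 & cassini_err a b = 0].

Ltac nc_ring_ab a b :=
  rewrite /left_rec_err /left_rec_err_prev /qcomm_err /cassini_err /lin_step;
  nc_ring [:: C; Ci; a; b; A; B] hCCi hCiC.

Lemma rec_invariant_step a b :
  rec_invariant a b -> rec_invariant b (lin_step a b).
Proof.
case=> hL hL' hH hJ; split.
- have -> : left_rec_err b (lin_step a b) =
            left_rec_err a b * (A + B) - left_rec_err_prev a b * Ci by nc_ring_ab a b.
  by rewrite hL hL' !mul0r subrr.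
- have -> : left_rec_err_prev b (lin_step a b) = left_rec_err a b by nc_ring_ab a b.
  exact: hL.
- have -> : qcomm_err b (lin_step a b) = qcomm_err a b - b * left_rec_err a b
    by nc_ring_ab a b.
  by rewrite hH hL mulr0 subrr.
- have -> : cassini_err b (lin_step a b) =
            cassini_err a b + lin_step a b * left_rec_err a b by nc_ring_ab a b.
  by rewrite hJ hL mulr0 addr0.
Qed.

Lemma rec_invariant_rel4 a b :
  rec_invariant a b -> qcomm_err b (lin_step a b) = 0 ->
  (lin_step a b * C * b - 1) * C * (b * C * a - 1) = 1 + b ^+ 4.
Proof.
case=> _ _ _ hJ hH'; apply/eqP; rewrite -subr_eq0; apply/eqP.
have -> : (lin_step a b * C * b - 1) * C * (b * C * a - 1) - (1 + b ^+ 4) =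
    - qcomm_err b (lin_step a b) * C * (b * C * a - 1) + b * b * cassini_err a b
    - b * qcomm_err b (lin_step a b) * C * a by nc_ring_ab a b.
by rewrite hH' hJ !(mul0r, mulr0, oppr0, add0r, subr0).
Qed.

Fixpoint lin_pair (a0 a1 : R) (k : nat) : R * R :=
  if k is k'.+1 then let p := lin_pair a0 a1 k' in (p.2, lin_step p.1 p.2)
  else (a0, a1).

Definition lin_seq a0 a1 k := (lin_pair a0 a1 k).1.

Lemma lin_seqSS a0 a1 k :
  lin_seq a0 a1 k.+2 = lin_step (lin_seq a0 a1 k) (lin_seq a0 a1 k.+1).
Proof. by []. Qed.

Lemma rec_invariant_seq a0 a1 : rec_invariant a0 a1 ->
  forall k, rec_invariant (lin_seq a0 a1 k) (lin_seq a0 a1 k.+1).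
Proof.
by move=> h; elim=> [|k IH] //; rewrite lin_seqSS; apply: rec_invariant_step.
Qed.

Definition bc_seq a0 a1 :=
  interleave (lin_seq a0 a1) (fun k => lin_seq a0 a1 k.+1 * C * lin_seq a0 a1 k - 1).

Lemma bc_seq_double a0 a1 k : bc_seq a0 a1 k.*2 = lin_seq a0 a1 k.
Proof. exact: interleave_double. Qed.

Lemma bc_seq_doubleS a0 a1 k :
  bc_seq a0 a1 k.*2.+1 = lin_seq a0 a1 k.+1 * C * lin_seq a0 a1 k - 1.
Proof. exact: interleave_doubleS. Qed.

Lemma bc_seq_rel a0 a1 m : rec_invariant a0 a1 ->
  bc_seq a0 a1 m.+2 * C * bc_seq a0 a1 m =
  1 + bc_seq a0 a1 m.+1 ^+ (if odd m then 4 else 1).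
Proof.
move=> h; case: (double_or_doubleS m) => [[k ->]|[k ->]]; rewrite /= ?odd_double /=.
- by rewrite -doubleS !bc_seq_double bc_seq_doubleS addrC subrK.
- rewrite -!doubleS !bc_seq_doubleS bc_seq_double lin_seqSS.
  apply: rec_invariant_rel4; first exact: rec_invariant_seq.
  by rewrite -lin_seqSS; case: (rec_invariant_seq h k.+1).
Qed.

(* Expanding [a_{j+2} = a_{j+1} (A + B) - a_j C^-1] in the four auxiliary
   quantities below confines every subtraction to [M] and [M']. *)
Section SubtractionFree.
Variables (a0 a1 M M' : R) (P QR QL E : nat -> R).
Hypotheses (hM : M = A * B - Ci) (hM' : M' = B * C * A - 1).
Hypothesis hinv : rec_invariant a0 a1.
Hypotheses (hP0 : P 0%N = a1) (hQR0 : QR 0%N = a1 * B - a0 * Ci)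
  (hQL0 : QL 0%N = B * C * a1 - C * a0) (hE0 : E 0%N = QR 0%N * C * a1 - 1).
Hypothesis hrec : forall j, [/\ P j.+1 = P j * A + QR j,
  QR j.+1 = P j * M + QR j * B,
  QL j.+1 = M' * C * P j + B * C * QL j &
  E j.+1 = P j * M * C * A * C * P j + P j * M * C * QL j + E j
           + QR j * M' * C * P j + QR j * B * C * QL j].

Local Notation a := (lin_seq a0 a1).

Lemma subtraction_free_spec j :
  [/\ P j = a j.+1, QR j = a j.+1 * B - a j * Ci,
      QL j = B * C * a j.+1 - C * a j & E j = QR j * C * a j.+1 - 1].
Proof.
elim: j => [|j [e1 e2 e3 e4]]; first by split; rewrite // hP0.
have [hL _ _ _] := rec_invariant_seq hinv j.
have [hP hQR hQL hE] := hrec j.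
move: hL; rewrite /left_rec_err !lin_seqSS /lin_step => hL.
split.
- by rewrite hP e1 e2; nc_ring [:: C; Ci; a j; a j.+1; A; B] hCCi hCiC.
- by rewrite hQR e1 e2 hM; nc_ring [:: C; Ci; a j; a j.+1; A; B] hCCi hCiC.
- apply/eqP; rewrite -subr_eq0 hQL e1 e3 hM'; apply/eqP.
  rewrite -[RHS](mulr0 (B * C)) -[in RHS]hL.
  by nc_ring [:: C; Ci; a j; a j.+1; A; B] hCCi hCiC.
- apply/eqP; rewrite -subr_eq0 hE hQR e4 e1 e2 e3 hM hM'; apply/eqP.
  rewrite -[RHS](mulr0 ((a j.+1 * (A * B - Ci) + (a j.+1 * B - a j * Ci) * B) * C)).
  rewrite -[in RHS]hL; nc_ring [:: C; Ci; a j; a j.+1; A; B] hCCi hCiC.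
Qed.

Lemma subtraction_free_bc_seq j :
  bc_seq a0 a1 j.+1.*2 = P j /\
  bc_seq a0 a1 j.+1.*2.+1 = P j * A * C * P j + E j.
Proof.
have [e1 e2 _ e4] := subtraction_free_spec j.
rewrite bc_seq_double bc_seq_doubleS e4 e2 e1 lin_seqSS /lin_step; split=> //.
nc_ring [:: C; Ci; a j; a j.+1; A; B] hCCi hCiC.
Qed.

End SubtractionFree.

End LinearRecurrence.

(** * Positivity *)

Local Infix "+L" := lp_add (at level 50, left associativity).
Local Infix "*L" := lp_mul (at level 40, left associativity).

Definition nonneg_terms (p : LP) : bool := all (fun t => 0 <= t.1) p.

Lemma nonneg_terms_add p q :
  nonneg_terms p -> nonneg_terms q -> nonneg_terms (p +L q).
Proof. by move=> hp hq; rewrite /nonneg_terms /lp_add all_cat; apply/andP. Qed.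

Lemma nonneg_terms_mul p q :
  nonneg_terms p -> nonneg_terms q -> nonneg_terms (p *L q).
Proof.
move=> /allP hp /allP hq; apply/allP => _ /allpairsP[[t s] [/= tin sin ->]] /=.
by apply: mulr_ge0; [apply: hp | apply: hq].
Qed.

Lemma nonneg_terms_nonneg p : nonneg_terms p -> lp_nonneg p.
Proof.
move=> /allP hp w; rewrite /coef big_seq_cond.
by apply: sumr_ge0 => t /andP[tin _]; apply: hp.
Qed.

Definition Cinv : LP := lp_word [:: gy; gx; gyi; gxi].

Notation Cz := (zf2 Ccoef).
Notation Ciz := (zf2 Cinv).

Ltac zf2_compute :=
  repeat progress rewrite -?zf2_mul -?zf2_opp -?zf2_add -?zf2_one -?zf2_pow -?zf2_zero;
  apply/zf2_eq/lp_eqP; vm_compute; reflexivity.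

Lemma mulCCi : Cz * Ciz = 1. Proof. zf2_compute. Qed.
Lemma mulCiC : Ciz * Cz = 1. Proof. zf2_compute. Qed.

Record seed := Seed {
  s_a0 : LP; s_a1 : LP; s_A : LP; s_B : LP; s_M : LP; s_M' : LP;
  s_QR : LP; s_QL : LP; s_E : LP; s_o0 : LP }.

Record quad := Quad { qP : LP; qQR : LP; qQL : LP; qE : LP }.

Section SeedSequence.
Variable s : seed.
Local Notation a0 := (s_a0 s).
Local Notation a1 := (s_a1 s).
Local Notation A := (s_A s).
Local Notation B := (s_B s).
Local Notation M := (s_M s).
Local Notation M' := (s_M' s).
Local Notation QR := (s_QR s).
Local Notation QL := (s_QL s).
Local Notation E := (s_E s).
Local Notation o0 := (s_o0 s).

Definition seed_ok : Prop :=
  [/\ rec_invariant Cz Ciz (zf2 A) (zf2 B) (zf2 a0) (zf2 a1),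
      zf2 o0 = zf2 a1 * Cz * zf2 a0 - 1,
      zf2 M = zf2 A * zf2 B - Ciz & zf2 M' = zf2 B * Cz * zf2 A - 1] /\
  [/\ zf2 QR = zf2 a1 * zf2 B - zf2 a0 * Ciz,
      zf2 QL = zf2 B * Cz * zf2 a1 - Cz * zf2 a0 &
      zf2 E = zf2 QR * Cz * zf2 a1 - 1].

Definition seed_nonneg : bool :=
  all nonneg_terms [:: a0; a1; A; B; M; M'; QR; QL; E; o0].

Definition aux_step (q : quad) : quad :=
  let: Quad P Q L F := q in
  Quad (P *L A +L Q) (P *L M +L Q *L B)
       (M' *L Ccoef *L P +L B *L Ccoef *L L)
       (P *L M *L Ccoef *L A *L Ccoef *L P +L P *L M *L Ccoef *L L +L F
        +L Q *L M' *L Ccoef *L P +L Q *L B *L Ccoef *L L).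

Definition aux_seq (j : nat) : quad := iter j aux_step (Quad a1 QR QL E).

Definition seed_seq : nat -> LP :=
  interleave (fun k => if k is j.+1 then qP (aux_seq j) else a0)
    (fun k => if k is j.+1 then
                let q := aux_seq j in qP q *L A *L Ccoef *L qP q +L qE q
              else o0).

Lemma aux_seqS j : aux_seq j.+1 = aux_step (aux_seq j).
Proof. exact: iterS. Qed.

Lemma zf2_aux_step q : let q' := aux_step q in
  [/\ zf2 (qP q') = zf2 (qP q) * zf2 A + zf2 (qQR q),
      zf2 (qQR q') = zf2 (qP q) * zf2 M + zf2 (qQR q) * zf2 B,
      zf2 (qQL q') = zf2 M' * Cz * zf2 (qP q) + zf2 B * Cz * zf2 (qQL q) &
      zf2 (qE q') = zf2 (qP q) * zf2 M * Cz * zf2 A * Cz * zf2 (qP q)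
        + zf2 (qP q) * zf2 M * Cz * zf2 (qQL q) + zf2 (qE q)
        + zf2 (qQR q) * zf2 M' * Cz * zf2 (qP q)
        + zf2 (qQR q) * zf2 B * Cz * zf2 (qQL q)].
Proof. by case: q => P Q L F /=; rewrite !(zf2_add, zf2_mul). Qed.

Lemma seed_seq_zf2 : seed_ok ->
  forall m, zf2 (seed_seq m) = bc_seq Cz Ciz (zf2 A) (zf2 B) (zf2 a0) (zf2 a1) m.
Proof.
case=> -[hinv ho hM hM'] [hQR hQL hE].
have aux_spec j := subtraction_free_bc_seq mulCCi mulCiC hM hM' hinv
  (P := fun j => zf2 (qP (aux_seq j))) (QR := fun j => zf2 (qQR (aux_seq j)))
  (QL := fun j => zf2 (qQL (aux_seq j))) (E := fun j => zf2 (qE (aux_seq j)))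
  erefl hQR hQL hE (fun j => zf2_aux_step (aux_seq j)) j.
move=> m; case: (double_or_doubleS m) => -[[|j] ->].
- by rewrite /seed_seq interleave_double bc_seq_double.
- by rewrite /seed_seq interleave_double (aux_spec j).1.
- by rewrite /seed_seq interleave_doubleS bc_seq_doubleS.
- by rewrite /seed_seq interleave_doubleS (aux_spec j).2 zf2_add !zf2_mul.
Qed.

Lemma seed_seq_rel m : seed_ok ->
  zf2 (seed_seq m.+2) * Cz * zf2 (seed_seq m) =
  1 + zf2 (seed_seq m.+1) ^+ (if odd m then 4 else 1).
Proof.
move=> ok; rewrite !seed_seq_zf2 //; apply: (bc_seq_rel mulCCi mulCiC).
by case: ok => -[].
Qed.

Definition quad_nonneg (q : quad) : bool :=
  [&& nonneg_terms (qP q), nonneg_terms (qQR q), nonneg_terms (qQL q)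
    & nonneg_terms (qE q)].

Ltac nonneg_closure :=
  repeat (apply: nonneg_terms_add || apply: nonneg_terms_mul).

Lemma seed_seq_nonneg m : seed_nonneg -> nonneg_terms (seed_seq m).
Proof.
move=> /allP hs.
have nn x : x \in [:: a0; a1; A; B; M; M'; QR; QL; E; o0] -> nonneg_terms x := hs x.
have nn_aux j : quad_nonneg (aux_seq j).
  elim: j => [|j]; first by apply/and4P; split; apply: nn; rewrite !inE eqxx ?orbT.
  rewrite aux_seqS; case: (aux_seq j) => P Q L F /and4P[hP hQ hL hF].
  by apply/and4P; split; nonneg_closure; rewrite // nn // !inE eqxx ?orbT.
case: (double_or_doubleS m) => -[[|j] ->];
  rewrite /seed_seq ?interleave_double ?interleave_doubleS.
- by apply: nn; rewrite !inE eqxx.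
- by case/and4P: (nn_aux j).
- by apply: nn; rewrite !inE eqxx ?orbT.
- case/and4P: (nn_aux j) => hP _ _ hE.
  by nonneg_closure; rewrite // nn // !inE eqxx ?orbT.
Qed.

End SeedSequence.

Definition lp_sum (ws : seq word) : LP := [seq (1, w) | w <- ws].

(* [a0, a1] are [R_0, R_2]; the coefficient [A + B] of the linear recurrence
   is split so that [M] and [M'] have non-negative coefficients. *)
Definition seed14 : seed := {|
  s_a0 := lp_sum [:: [:: gy; gx; gyi]];
  s_a1 := lp_sum [:: [:: gxi]; [:: gy; gxi]];
  s_A := lp_sum [:: [:: gxi; gxi]; [:: gxi; gyi; gxi]; [:: gy; gxi; gxi];
                    [:: gy; gxi; gyi; gxi]];
  s_B := lp_sum [:: [:: gx; gx; gx; gyi; gxi]];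
  s_M := lp_sum [:: [:: gx; gyi; gxi]; [:: gxi; gyi; gx; gx; gyi; gxi];
                    [:: gy; gxi; gyi; gx; gx; gyi; gxi]];
  s_M' := lp_sum [:: [:: gx; gyi; gxi]; [:: gx; gx; gyi; gxi; gxi];
                     [:: gx; gx; gyi; gxi; gyi; gxi]];
  s_QR := lp_sum [:: [:: gx; gx; gyi; gxi]];
  s_QL := lp_sum [:: [:: gx; gx; gyi; gxi]];
  s_E := lp_sum [:: [:: gx; gyi; gxi]];
  s_o0 := lp_sum [:: [:: gy]] |}.

Definition seed41 : seed := {|
  s_a0 := lp_sum [:: [:: gy]];
  s_a1 := lp_sum [:: [:: gyi; gxi]; [:: gx; gyi; gxi]; [:: gy; gy; gy; gxi]];
  s_A := lp_sum [:: [:: gyi; gyi; gxi]; [:: gy; gy; gxi]; [:: gyi; gx; gyi; gxi];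
                    [:: gx; gyi; gyi; gxi]];
  s_B := lp_sum [:: [:: gx; gyi; gx; gyi; gxi]];
  s_M := lp_sum [:: [:: gyi; gyi; gyi; gx; gyi; gxi];
                    [:: gyi; gx; gyi; gyi; gx; gyi; gxi];
                    [:: gx; gyi; gyi; gyi; gx; gyi; gxi]];
  s_M' := lp_sum [:: [:: gx; gyi; gyi; gyi; gyi; gxi];
                     [:: gx; gyi; gyi; gyi; gx; gyi; gxi];
                     [:: gx; gyi; gyi; gx; gyi; gyi; gxi]];
  s_QR := lp_sum [:: [:: gyi; gyi; gx; gyi; gxi]; [:: gx; gyi; gyi; gx; gyi; gxi]];
  s_QL := lp_sum [:: [:: gx; gyi; gyi; gyi; gxi]; [:: gx; gyi; gyi; gx; gyi; gxi]];
  s_E := lp_sum [:: [:: gxi]; [:: gyi; gyi; gyi; gyi; gxi];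
                    [:: gyi; gyi; gyi; gx; gyi; gxi]; [:: gx; gyi; gyi; gyi; gyi; gxi];
                    [:: gx; gyi; gyi; gyi; gx; gyi; gxi]];
  s_o0 := lp_sum [:: [:: gxi]; [:: gy; gy; gy; gy; gxi]] |}.

Ltac seed_ok_compute :=
  split; [split; first split | split];
  rewrite /left_rec_err /left_rec_err_prev /qcomm_err /cassini_err /lin_step;
  zf2_compute.

Lemma seed14_ok : seed_ok seed14. Proof. seed_ok_compute. Qed.
Lemma seed41_ok : seed_ok seed41. Proof. seed_ok_compute. Qed.

Definition w_yxY : LP := lp_word [:: gy; gx; gyi].
Definition w_y : LP := lp_word [:: gy].

Definition forward_solution (b c : nat) (F : nat -> LP) : Prop :=
  [/\ forall k, nonneg_terms (F k), F 0%N = w_yxY, F 1%N = w_y &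
      forall i, zf2 (F i.+2) * Cz * zf2 (F i) =
                1 + zf2 (F i.+1) ^+ (if odd i.+1 then b else c)].

Lemma forward14 : forward_solution 1 4 (seed_seq seed14).
Proof.
split=> // [k|i]; first exact: seed_seq_nonneg.
by rewrite (seed_seq_rel _ seed14_ok) /=; case: (odd i).
Qed.

(* For [(4, 1)] the seed starts at index 1: [seed41] has [a0 = R_1 = y]. *)
Lemma forward41 :
  forward_solution 4 1 (fun n => if n is n'.+1 then seed_seq seed41 n' else w_yxY).
Proof.
split=> // [[|k]|[|i]] //; first exact: seed_seq_nonneg.
  zf2_compute.
by rewrite (seed_seq_rel _ seed41_ok) /=; case: (odd i).
Qed.

(** * Negative indices *)

(* [iota] is the anti-automorphism of the free group with
   [x |-> (y x y^-1) y (y x y^-1)^-1] and [y |-> y x y^-1]; it is an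
   involution, fixes [C] and exchanges [y] and [y x y^-1]. *)
Definition iota_letter (l : letter) : word :=
  match l with
  | (false, false) => [:: gy; gx; gy; gxi; gyi]
  | (false, true) => [:: gy; gx; gyi; gxi; gyi]
  | (true, false) => [:: gy; gx; gyi]
  | (true, true) => [:: gy; gxi; gyi]
  end.

Definition iota_word (w : word) : word := flatten (rev (map iota_letter w)).

Lemma iota_word_cat u v : iota_word (u ++ v) = iota_word v ++ iota_word u.
Proof. by rewrite /iota_word map_cat rev_cat flatten_cat. Qed.

Lemma iota_word_cons a w : iota_word (a :: w) = iota_word w ++ iota_letter a.
Proof. by rewrite -cat1s iota_word_cat /iota_word /= cats0. Qed.

Lemma iota_letter_inv l : iota_letter (inv_letter l) = winv (iota_letter l).
Proof. by case: l => [[] []]. Qed.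

Lemma red_iota_word_red w : red (iota_word w) = red (iota_word (red w)).
Proof.
elim: w => [|a w IH] //.
rewrite iota_word_cons red_catl IH -red_catl -iota_word_cons red_cons.
case: (red w) (reduced_red w) => [|b r] //= _.
case: eqP => [->|_] //.
by rewrite !iota_word_cons iota_letter_inv -catA red_catr red_winv_cat cats0.
Qed.

Lemma red_iota_wordK w : red (iota_word (iota_word w)) = red w.
Proof.
elim: w => [|a w IH] //.
rewrite iota_word_cons iota_word_cat red_cat IH.
have -> : red (iota_word (iota_letter a)) = [:: a] by case: a => [[] []].
by rewrite cat1s !red_cons red_idem.
Qed.

Definition iota_lp (p : LP) : LP := [seq (t.1, iota_word t.2) | t <- p].

Lemma coef_iota_lp p w :
  red w = w -> coef (iota_lp p) w = coef p (red (iota_word w)).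
Proof.
move=> hw; rewrite /coef /iota_lp big_map /=; apply: eq_bigl => t /=.
apply/eqP/eqP => h; first by rewrite -red_iota_wordK red_iota_word_red h.
by rewrite red_iota_word_red h -red_iota_word_red red_iota_wordK.
Qed.

Lemma lp_eq_iota p q : lp_eq p q -> lp_eq (iota_lp p) (iota_lp q).
Proof.
move=> h w; case: (eqVneq (red w) w) => hw; last by rewrite !coef_nonreduced.
by rewrite !coef_iota_lp // h.
Qed.

Lemma iota_lp_mul p q :
  lp_eq (iota_lp (lp_mul p q)) (lp_mul (iota_lp q) (iota_lp p)).
Proof.
move=> w; rewrite /coef /iota_lp /lp_mul big_map big_mkcond big_allpairs_dep /=.
rewrite [RHS]big_mkcond big_allpairs_dep /= big_map.
under [RHS]eq_bigr do rewrite big_map.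
rewrite [RHS]exchange_big /=; apply: eq_bigr => t _; apply: eq_bigr => s _.
by rewrite iota_word_cat mulrC.
Qed.

Lemma nonneg_terms_iota p : nonneg_terms (iota_lp p) = nonneg_terms p.
Proof. by rewrite /nonneg_terms /iota_lp all_map. Qed.

Definition iotaZ (x : ZF2) : ZF2 := zf2 (iota_lp (repr x)).

Lemma iotaZ_zf2 p : iotaZ (zf2 p) = zf2 (iota_lp p).
Proof. exact/zf2_eq/lp_eq_iota/lp_eq_repr. Qed.

Lemma iotaZ_add x y : iotaZ (x + y) = iotaZ x + iotaZ y.
Proof.
elim/quotW: x => p; elim/quotW: y => q.
by rewrite -zf2_add !iotaZ_zf2 /iota_lp /lp_add map_cat zf2_add.
Qed.

Lemma iotaZ_mul x y : iotaZ (x * y) = iotaZ y * iotaZ x.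
Proof.
elim/quotW: x => p; elim/quotW: y => q.
by rewrite -zf2_mul !iotaZ_zf2 -zf2_mul; apply/zf2_eq/iota_lp_mul.
Qed.

Lemma iotaZ_exp x n : iotaZ (x ^+ n) = iotaZ x ^+ n.
Proof.
elim: n => [|n IH]; first by rewrite !expr0 -zf2_one iotaZ_zf2.
by rewrite exprS iotaZ_mul IH exprSr.
Qed.

Lemma iotaZ_C : iotaZ Cz = Cz.
Proof. by rewrite iotaZ_zf2; apply/zf2_eq/lp_eqP; vm_compute. Qed.

Lemma iotaZ_yxY : iotaZ (zf2 w_yxY) = zf2 w_y.
Proof. by rewrite iotaZ_zf2; apply/zf2_eq/lp_eqP; vm_compute. Qed.

Lemma iotaZ_y : iotaZ (zf2 w_y) = zf2 w_yxY.
Proof. by rewrite iotaZ_zf2; apply/zf2_eq/lp_eqP; vm_compute. Qed.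

Lemma iotaZ_rel x y z n : x * Cz * y = 1 + z ^+ n ->
  iotaZ y * Cz * iotaZ x = 1 + iotaZ z ^+ n.
Proof.
move/(congr1 iotaZ); rewrite !iotaZ_mul iotaZ_add iotaZ_exp iotaZ_C mulrA.
by rewrite -zf2_one iotaZ_zf2.
Qed.

Definition bc_solution (b c : nat) (n0 : int) (R : int -> LP) : Prop :=
  lp_eq (R n0) w_yxY /\ lp_eq (R (n0 + 1)) w_y /\
  bc_system b c Ccoef R /\ (forall n : int, lp_nonneg (R n)).

Lemma bc_system_zf2 b c (R : int -> LP) :
  (forall n : int, zf2 (R (n + 1)) * Cz * zf2 (R (n - 1)) =
                   1 + zf2 (R n) ^+ (if odd `|n|%N then b else c)) ->
  bc_system b c Ccoef R.
Proof. by move=> h n; apply/zf2_eq; rewrite zf2_add zf2_one zf2_pow !zf2_mul h. Qed.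

Lemma int_pos_or_npos (n : int) :
  (exists k : nat, n = k.+1) \/ (exists i : nat, n = - Posz i).
Proof.
by case: n => [[|k]|k]; [right; exists 0%N | left; exists k | right; exists k.+1].
Qed.

(* Negative indices come from a forward solution of the [(c, b)]-system
   through [iota], which exchanges the two initial values. *)
Lemma bc_solution_of_forward b c F G :
  forward_solution b c F -> forward_solution c b G -> exists R, bc_solution b c 0 R.
Proof.
case=> pF F0 F1 hF [pG G0 G1 hG].
pose R (n : int) := if 0 <= n then F `|n|%N else iota_lp (G `|1 - n|%N).
have R_nat (k : nat) : R k = F k by [].
have R_neg (i : nat) : zf2 (R (1 - Posz i)) = iotaZ (zf2 (G i)).
  case: i => [|[|i]]; rewrite ?G0 ?G1 ?iotaZ_yxY ?iotaZ_y //.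
  - by rewrite -[1 - 0]/(Posz 1) R_nat F1.
  - by rewrite -[1 - 1]/(Posz 0) R_nat F0.
  - by rewrite /R /= subn1 add1n iotaZ_zf2.
exists R; do !split; rewrite ?R_nat ?F0 ?F1 //; last first.
  move=> n; apply: nonneg_terms_nonneg.
  by rewrite /R; case: ifP; rewrite ?nonneg_terms_iota.
apply: bc_system_zf2 => n; case: (int_pos_or_npos n) => -[k ->].
- have -> : Posz k.+1 + 1 = k.+2 by lia.
  have -> : Posz k.+1 - 1 = k by lia.
  by rewrite !R_nat hF.
- have -> : - Posz k + 1 = 1 - Posz k by lia.
  have -> : - Posz k - 1 = 1 - Posz k.+2 by lia.
  have e : - Posz k = 1 - Posz k.+1 by lia.
  have -> : (if odd `|- Posz k|%N then b else c) = if odd k.+1 then c else b.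
    by rewrite abszN absz_nat /=; case: (odd k).
  by rewrite !R_neg e R_neg; apply: iotaZ_rel.
Qed.

Lemma odd_absz_subr1 (n : int) : odd `|n - 1|%N = ~~ odd `|n|%N.
Proof.
have [->|->] : (`|n - 1| = `|n|.+1 \/ `|n| = `|n - 1|.+1)%N by lia.
all: by rewrite /= ?negbK.
Qed.

Lemma bc_solution_shift b c R :
  bc_solution c b 0 R -> bc_solution b c 1 (fun n => R (n - 1)).
Proof.
case=> h0 [h1 [hs hn]]; do 2!split=> //; split=> [n|n]; last exact: hn.
have := hs (n - 1); rewrite odd_absz_subr1 subrK -[n + 1 - 1]addrAC subrK.
by case: (odd _).
Qed.

Unset Implicit Arguments.
Theorem theorem4p13 (b c : nat) :
  (b, c) = (1%N, 4%N) \/ (b, c) = (4%N, 1%N) ->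
  (exists R : int -> LP,
      lp_eq (R 0) (lp_word [:: gy; gx; gyi]) /\
      lp_eq (R 1) (lp_word [:: gy]) /\
      bc_system b c Ccoef R /\
      (forall n : int, lp_nonneg (R n))) /\
  (exists R : int -> LP,
      lp_eq (R 1) (lp_word [:: gy; gx; gyi]) /\
      lp_eq (R 2) (lp_word [:: gy]) /\
      bc_system b c Ccoef R /\
      (forall n : int, lp_nonneg (R n))).
Proof.
have solution b' c' : (b', c') = (1%N, 4%N) \/ (b', c') = (4%N, 1%N) ->
    exists R, bc_solution b' c' 0 R.
  case=> -[-> ->]; apply: bc_solution_of_forward;
    [exact: forward14 | exact: forward41 | exact: forward41 | exact: forward14].
move=> hbc; split; first exact: solution.
have [R hR] : exists R, bc_solution c b 0 R.
  by apply: solution; case: hbc => -[-> ->]; [right | left].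
by exists (fun n => R (n - 1)); apply: bc_solution_shift.
Qed.
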